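(* For all disjoint subsets $X_i, X_j \subseteq A$: if $X_i \leadsto X_j$, then for every $S' \subseteq S$, $$\Psi_{X_i \cup X_j}(S') = (\Psi_{X_i} \oslash \Psi_{X_j})\big(\Omega_{X_i \cup X_j}(S')\big).$$
   Context: Let $A$ be a finite set of agents. For each $a \in A$ let $S_a$ be a nonempty finite set, and $S = \prod_{a \in A} S_a$ the set of states. For each $a \in A$ let $\to_a \subseteq S \times S$ be a relation that is either empty or left-total, such that whenever $s \to_a s'$, either $s = s'$ or $s$ and $s'$ differ only in the $a$-component. For $X \subseteq A$ let $\to_X = \bigcup_{a \in X} \to_a$ and $\to_X^*$ its reflexive-transitive closure; for $T \subseteq S$, $(T \to_X) = \{ t' : \exists t \in T,\ t \to_X t'\}$. Orbit operator: $\Omega_X(S') = \{ s' : \exists s \in S',\ s \to_X^* s'\}$. Equilibria operator: $\Psi_X(S') = \{ s \in \Omega_X(S') : \forall s' \in S,\ s \to_X^* s' \implies s' \to_X^* s \}$. $M$-relation: $X \leadsto Y$ iff for every $S' \subseteq S$, with $T = \Psi_X(\Psi_{X \cup Y}(S'))$, one has $(T \to_Y) \subseteq T$. Composition operator: for $X, Y \subseteq A$, let $\rightleftharpoons_X$ be the equivalence relation on $S$ given by $s \rightleftharpoons_X s'$ iff $s \to_X^* s'$ and $s' \to_X^* s$; $[s]_X$ denotes the class of $s$ and $[S']_X = \{[s]_X : s \in S'\}$. On classes define $c \Rightarrow_Y c'$ iff there exist $s \in c$, $s' \in c'$ with $s \to_Y s'$, and let $\Rightarrow_Y^*$ be its reflexive-transitive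 closure. For $S'' \subseteq S$ let $[\widetilde{\Psi}_Y]_X(S'') = \{ e \in [S'']_X : \{e' : e \Rightarrow_Y^* e'\} \subseteq [S'']_X \text{ and } \forall e' \in [S]_X,\ e \Rightarrow_Y^* e' \implies e' \Rightarrow_Y^* e \}$, and for a set $E$ of subsets of $S$ let $\mathsf{Flatten}(E) = \bigcup_{e \in E} e$. Then $(\Psi_X \oslash \Psi_Y)(S'') = \mathsf{Flatten}\big([\widetilde{\Psi}_Y]_X(\Psi_X(S''))\big)$. *)

From HB Require Import structures.
From mathcomp Require Import all_boot.
Set Implicit Arguments. Unset Strict Implicit. Unset Printing Implicit Defensive.

(* Agents: a finite type A; local state spaces Sa a (finite types);
   global states S = product over agents = dependent finite functions. *)
Notation state A Sa := {dffun forall a : A, Sa a}.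

Section Defs.
Variables (A : finType) (Sa : A -> finType).
Variable step : A -> rel (state A Sa).

Local Notation S := (state A Sa).

Definition stepX (X : {set A}) : rel S := fun s t => [exists a in X, step a s t].

Definition reach (X : {set A}) : rel S := connect (stepX X).

Definition Omega (X : {set A}) (S' : {set S}) : {set S} :=
  [set t | [exists s in S', reach X s t]].

Definition Psi (X : {set A}) (S' : {set S}) : {set S} :=
  [set s in Omega X S' | [forall t, reach X s t ==> reach X t s]].

Definition leadsto (X Y : {set A}) : Prop :=
  forall S' : {set S},
    let T := Psi X (Psi (X :|: Y) S') in
    forall t t', t \in T -> stepX Y t t' -> t' \in T.

Definition cls (X : {set A}) (s : S) : {set S} :=
  [set t | reach X s t && reach X t s].

Definition clsset (X : {set A}) (S' : {set S}) : {set {set S}} :=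
  [set cls X s | s in S'].

Definition cstep (X Y : {set A}) : rel {set S} := fun c c' =>
  [&& c \in clsset X setT, c' \in clsset X setT &
      [exists s in c, exists s' in c', stepX Y s s']].

Definition creach (X Y : {set A}) : rel {set S} := connect (cstep X Y).

Definition PsiTilde (Y X : {set A}) (S'' : {set S}) : {set {set S}} :=
  [set e in clsset X S'' |
     [forall e', creach X Y e e' ==> (e' \in clsset X S'')] &&
     [forall e' in clsset X setT, creach X Y e e' ==> creach X Y e' e]].

Definition Flatten (E : {set {set S}}) : {set S} := \bigcup_(e in E) e.

Definition compose (X Y : {set A}) (S'' : {set S}) : {set S} :=
  Flatten (PsiTilde Y X (Psi X S'')).

End Defs.

From HB Require Import structures.
From mathcomp Require Import all_boot.

Set Implicit Arguments. Unset Strict Implicit. Unset Printing Implicit Defensive.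

(* Write Z for Xi :|: Xj and R for Psi_Z(S').  The M-relation forces every
   state of R to be Xi-recurrent: Psi_Xi(R) is closed under Z-steps, and a
   Z-recurrent state u is Z-reachable from any Xi-recurrent state that u
   reaches by Xi-steps.
   Consequently, starting from R, Xi-steps never leave an Xi-class and
   Xj-steps are exactly the steps of the class graph, so Z-reachability
   between states of R is =>_Xj^*-reachability between their Xi-classes,
   and Z-recurrence of a state is recurrence of its class in the class graph. *)

Lemma connect_ind (T : finType) (e : rel T) (P : T -> Prop) x y :
  (forall u v, P u -> e u v -> P v) -> P x -> connect e x y -> P y.
Proof.
move=> eP Px /connectP [p + ->]; elim: p x Px => //= v p IHp x Px /andP [exv pv].
exact: IHp (eP x v Px exv) pv.
Qed.

Section Equilibria.
Variables (A : finType) (Sa : A -> finType) (step : A -> rel (state A Sa)).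
Local Notation S := (state A Sa).
Local Notation reach := (reach step).
Local Notation cls := (cls step).
Local Notation creach := (creach step).
Implicit Types (X Y Z : {set A}) (P : {set S}) (s t u v y : S).

Definition recurrent X s := [forall t, reach X s t ==> reach X t s].

Lemma recurrentP X s :
  reflect (forall t, reach X s t -> reach X t s) (recurrent X s).
Proof. by apply: (iffP forallP) => rec t; apply/implyP; apply: rec. Qed.

Lemma recurrent_reach X s t : recurrent X s -> reach X s t -> recurrent X t.
Proof.
move=> /recurrentP rec st; apply/recurrentP => u tu.
exact: connect_trans (rec u (connect_trans st tu)) st.
Qed.

Lemma mem_Psi X P s : (s \in Psi step X P) = (s \in Omega step X P) && recurrent X s.
Proof. by rewrite inE. Qed.

Lemma Omega_refl X P s : s \in P -> s \in Omega step X P.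
Proof. by move=> sP; rewrite inE; apply/existsP; exists s; rewrite sP /reach connect0. Qed.

Lemma Omega_reach X P s t :
  s \in Omega step X P -> reach X s t -> t \in Omega step X P.
Proof.
rewrite !inE => /existsP [r /andP [rP rs]] st.
by apply/existsP; exists r; rewrite rP; apply: connect_trans rs st.
Qed.

Lemma Psi_reach X P s t : s \in Psi step X P -> reach X s t -> t \in Psi step X P.
Proof.
rewrite !mem_Psi => /andP [sO srec] st.
by rewrite (Omega_reach sO st) (recurrent_reach srec st).
Qed.

Lemma stepXU X Y s t :
  stepX step (X :|: Y) s t = stepX step X s t || stepX step Y s t.
Proof.
apply/existsP/orP => [[a /andP [/setUP [aX|aY] h]]|[] /existsP [a /andP [aI h]]].
- by left; apply/existsP; exists a; rewrite aX.
- by right; apply/existsP; exists a; rewrite aY.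
- by exists a; rewrite inE aI.
- by exists a; rewrite inE aI orbT.
Qed.

Lemma reach_subset X Z s t : X \subset Z -> reach X s t -> reach Z s t.
Proof.
move=> sXZ; apply: connect_sub => u v /existsP [a /andP [aX h]].
by apply: connect1; apply/existsP; exists a; rewrite (subsetP sXZ a aX).
Qed.

Lemma Omega_Omega X Z P s :
  X \subset Z -> s \in Omega step X (Omega step Z P) -> s \in Omega step Z P.
Proof.
move=> sXZ; rewrite [s \in Omega _ X _]inE => /existsP [r /andP [rO rs]].
exact: Omega_reach rO (reach_subset sXZ rs).
Qed.

Lemma exists_recurrent X s : exists2 t, reach X s t & recurrent X t.
Proof.
pose succ t := [set u | reach X t u].
have [t st tmin] := arg_minnP (fun t => #|succ t|) (connect0 (stepX step X) s).
exists t => //; apply/recurrentP => u tu.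
have sub_ut : succ u \subset succ t.
  by apply/subsetP => v; rewrite !inE; apply: connect_trans tu.
have /eqP eq_ut : succ u == succ t.
  by rewrite eqEcard sub_ut tmin // (connect_trans st tu).
have : t \in succ t by rewrite inE /reach connect0.
by rewrite -eq_ut inE.
Qed.

Lemma leadsto_recurrent X Y P s :
  leadsto step X Y -> s \in Psi step (X :|: Y) P -> recurrent X s.
Proof.
move=> XY sR; set T := Psi step X (Psi step (X :|: Y) P).
have T_closed u v : u \in T -> stepX step (X :|: Y) u v -> v \in T.
  rewrite stepXU => uT /orP [uv|]; last exact: XY.
  exact: Psi_reach uT (connect1 uv).
have [t st trec] := exists_recurrent X s.
have tT : t \in T by rewrite mem_Psi trec andbT inE; apply/existsP; exists s; rewrite sR.
have ts : reach (X :|: Y) t s.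
  move: sR; rewrite mem_Psi => /andP [_ /recurrentP]; apply.
  exact: reach_subset (subsetUl _ _) st.
have := connect_ind T_closed tT ts.
by rewrite mem_Psi => /andP [].
Qed.

Lemma leadsto_Psi_subset X Y P s :
  leadsto step X Y -> s \in Psi step (X :|: Y) P ->
  s \in Psi step X (Omega step (X :|: Y) P).
Proof.
move=> XY sR; rewrite mem_Psi (leadsto_recurrent XY sR) andbT.
by apply: Omega_refl; move: sR; rewrite mem_Psi => /andP [].
Qed.

Lemma cls_refl X s : s \in cls X s.
Proof. by rewrite inE /reach connect0. Qed.

Lemma eq_cls X s t : reach X s t -> reach X t s -> cls X s = cls X t.
Proof.
move=> st ts; apply/setP => u; rewrite !inE.
apply/andP/andP => [[su us]|[tu ut]]; split.
- exact: connect_trans ts su.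
- exact: connect_trans us st.
- exact: connect_trans st tu.
- exact: connect_trans ut ts.
Qed.

Lemma mem_cls_eq X s t : t \in cls X s -> cls X s = cls X t.
Proof. by rewrite inE => /andP [st ts]; apply: eq_cls. Qed.

Lemma mem_clsset_Psi X P s :
  (cls X s \in clsset step X (Psi step X P)) = (s \in Psi step X P).
Proof.
apply/imsetP/idP => [[r rPsi eq_rs]|]; last by exists s.
have : s \in cls X r by rewrite -eq_rs cls_refl.
by rewrite inE => /andP [rs _]; apply: Psi_reach rPsi rs.
Qed.

Lemma mem_Flatten_cls X (E : {set {set S}}) s :
  E \subset clsset step X setT -> (s \in Flatten E) = (cls X s \in E).
Proof.
move=> Ecls; apply/bigcupP/idP => [[e eE se]|]; last by exists (cls X s); rewrite ?cls_refl.
have /imsetP [r _ er] := subsetP Ecls e eE.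
by move: se eE; rewrite er => /mem_cls_eq ->.
Qed.

Lemma cstep_cls X Y s t : stepX step Y s t -> cstep step X Y (cls X s) (cls X t).
Proof.
move=> st; rewrite /cstep !imset_f ?inE //=.
by apply/existsP; exists s; rewrite cls_refl; apply/existsP; exists t; rewrite cls_refl.
Qed.

Lemma creach_clsset X Y c c' :
  creach X Y c c' -> c \in clsset step X setT -> c' \in clsset step X setT.
Proof.
move=> cc' cX; apply: (connect_ind (P := fun d => d \in clsset step X setT)) cX cc'.
by move=> d d' _ /and3P [].
Qed.

Lemma creach_reach X Y s c t :
  creach X Y (cls X s) c -> t \in c -> reach (X :|: Y) s t.
Proof.
have sub_reach u v : reach X u v -> reach (X :|: Y) u v.
  exact: reach_subset (subsetUl _ _).
move=> sc; move: t.
pose below_s (d : {set S}) := forall t, t \in d -> reach (X :|: Y) s t.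
apply: (connect_ind (P := below_s)) _ _ sc.
  move=> d d' sd /and3P [_ /imsetP [w _ ->]].
  move=> /existsP [u /andP [ud /existsP [v /andP [vw uv]]]] t tw.
  have uvZ : stepX step (X :|: Y) u v by rewrite stepXU uv orbT.
  apply: connect_trans (sd u ud) (connect_trans (connect1 uvZ) (sub_reach _ _ _)).
  by move: vw tw; rewrite !inE => /andP [_ vw] /andP [wt _]; apply: connect_trans vw wt.
by move=> t; rewrite inE => /andP [st _]; apply: sub_reach.
Qed.

Lemma creach_cls_reach X Y s t :
  creach X Y (cls X s) (cls X t) -> reach (X :|: Y) s t.
Proof. by move=> st; apply: creach_reach st (cls_refl X t). Qed.

(* Along a Z-path whose states are X-recurrent, X-steps keep the class fixed. *)
Lemma reach_creach X Y s t :
  (forall y, creach X Y (cls X s) (cls X y) -> recurrent X y) ->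
  reach (X :|: Y) s t -> creach X Y (cls X s) (cls X t).
Proof.
move=> rec st.
apply: (connect_ind (P := fun y : S => creach X Y (cls X s) (cls X y))) _ (connect0 _ _) st.
move=> y y' sy; rewrite stepXU => /orP [yy'|yy'].
  rewrite -(eq_cls (connect1 yy')) //.
  by move/recurrentP: (rec y sy); apply; apply: connect1.
exact: connect_trans sy (connect1 (cstep_cls X yy')).
Qed.

Lemma mem_composeP X Y P s :
  reflect [/\ s \in Psi step X P,
              forall t, creach X Y (cls X s) (cls X t) -> t \in Psi step X P &
              forall t, creach X Y (cls X s) (cls X t) -> creach X Y (cls X t) (cls X s)]
          (s \in compose step X Y P).
Proof.
have sub_clsset : PsiTilde step Y X (Psi step X P) \subset clsset step X setT.
  by apply/subsetP => e; rewrite inE => /andP [/imsetP [r _ ->] _]; apply: imset_f.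
have is_cls c : creach X Y (cls X s) c -> exists t, c = cls X t.
  by move=> /creach_clsset /(_ (imset_f _ (in_setT s))) /imsetP [t _ ->]; exists t.
rewrite /compose (mem_Flatten_cls _ sub_clsset) [_ \in PsiTilde _ _ _ _]inE mem_clsset_Psi.
apply: (iffP and3P) => [[sP /forallP fwd /forall_inP bwd]|[sP fwd bwd]]; split => //.
- by move=> t st; rewrite -mem_clsset_Psi; apply: (implyP (fwd _)).
- by move=> t; apply/implyP; apply: bwd; apply: imset_f.
- by apply/forallP => c; apply/implyP => /[dup] /is_cls [t ->] /fwd; apply: imset_f.
- by apply/forall_inP => c _; apply/implyP => /[dup] /is_cls [t ->] /bwd.
Qed.

End Equilibria.

Theorem lemma2 (A : finType) (Sa : A -> finType)
  (HSa : forall a : A, 0 < #|Sa a|)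
  (step : A -> rel {dffun forall a : A, Sa a})
  (Hstep_tot : forall a : A,
      (forall s t, ~~ step a s t) \/ (forall s, exists t, step a s t))
  (Hstep_loc : forall (a : A) s t, step a s t ->
      s = t \/ (forall b : A, b != a -> s b = t b))
  (Xi Xj : {set A}) :
  [disjoint Xi & Xj] ->
  leadsto step Xi Xj ->
  forall S' : {set {dffun forall a : A, Sa a}},
    Psi step (Xi :|: Xj) S' =
    compose step Xi Xj (Omega step (Xi :|: Xj) S').
Proof.
move=> _ XY S'; apply/setP => s; apply/idP/mem_composeP => [sR|[sP fwd bwd]].
  have R_of_creach t : creach step Xi Xj (cls step Xi s) (cls step Xi t) ->
      t \in Psi step (Xi :|: Xj) S'.
    by move/creach_cls_reach; apply: Psi_reach sR.
  split=> [|t /R_of_creach /(leadsto_Psi_subset XY) //|t st].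
    exact: leadsto_Psi_subset.
  apply: reach_creach => [y /creach_cls_reach ty|].
    exact: leadsto_recurrent XY (Psi_reach (R_of_creach t st) ty).
  by move: sR; rewrite mem_Psi => /andP [_ /recurrentP]; apply; apply: creach_cls_reach.
move: sP; rewrite !mem_Psi => /andP [/(Omega_Omega (subsetUl Xi Xj)) -> _] /=.
apply/recurrentP => t /(reach_creach _) st.
apply/creach_cls_reach/bwd/st => y /fwd.
by rewrite mem_Psi => /andP [].
Qed.
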